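(* Let $\bm A=(A_1,\dots,A_d)$ be Hermitian matrices in $M_n(\mathbb{C})$, $B\in M_n(\mathbb{C})$, and $(\bm\lambda,\nu)\in\mathbb{R}^d\times\mathbb{C}$. Suppose there is a unit vector $\bm\psi\in\mathbb{C}^n$ with $$2\sum_{i=1}^d\|A_i\bm\psi-\lambda_i\bm\psi\|^2+\|B\bm\psi-\nu\bm\psi\|^2+\|B^\dagger\bm\psi-\overline{\nu}\bm\psi\|^2\le\epsilon_1$$ and that $\sum_{i\neq k}\|[A_i,A_k]\|+\|F_{(\bm\lambda,\nu)}(\bm A,B)\|\le\epsilon_2$, for some $\epsilon_1,\epsilon_2\ge0$. Then $(\bm\lambda,\nu)\in\dot\Lambda^{C}_{\epsilon}(\bm A,B)$ with $\epsilon=\sqrt{\tfrac{1}{\sqrt2}\epsilon_1+\epsilon_2}$.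
   Context: Let $n,d,m$ be positive integers. Fix Hermitian matrices $\Gamma_1,\dots,\Gamma_d\in M_{2m}(\mathbb{C})$ with $\Gamma_i^2=I_{2m}$ and $\Gamma_i\Gamma_j=-\Gamma_j\Gamma_i$ for $i\neq j$ (a Clifford representation; the paper uses a specific one built from Pauli matrices). Write $P=\begin{bmatrix} I_m&0\\0&0_m\end{bmatrix}$ and $Q=\begin{bmatrix}0_m&0\\0&I_m\end{bmatrix}$ in $M_{2m}(\mathbb{C})$. For a $d$-tuple $\bm A=(A_1,\dots,A_d)$ of Hermitian matrices in $M_n(\mathbb{C})$, a matrix $B\in M_n(\mathbb{C})$ (not necessarily Hermitian or normal), and a probe site $(\bm\lambda,\nu)\in\mathbb{R}^d\times\mathbb{C}$, the non-Hermitian spectral localizer is $$L_{(\bm\lambda,\nu)}(\bm A,B)=\sum_{i=1}^d (A_i-\lambda_i I)\otimes\Gamma_i+(B-\nu I)\otimes P-(B-\nu I)^\dagger\otimes Q\in M_{2mn}(\mathbb{C}).$$ The Clifford radial gap is $\dot\mu^{C}_{(\bm\lambda,\nu)}(\bm A,B)=\sigma_{\min}\big(L_{(\bm\lambda,\nu)}(\bm A,B)\big)$, and the Clifford radial $\epsilon$-pseudospectrum is $\dot\Lambda^{C}_\epsilon(\bm A,B)=\{(\bm\lambda,\nu)\in\mathbb{R}^d\times\mathbb{C}:\dot\mu^{C}_{(\bm\lambda,\nu)}(\bm A,B)\le\epsilon\}$. Define $$F_{(\bm\lambda,\nu)}(\bm A,B)=\sum_{i=1}^d\big(G_i+G_i^\dagger\big)-\sum_{i=1}^d\big(H_i+H_i^\dagger\big),\quad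 G_i=(A_i-\lambda_i I)(B-\nu I)\otimes\Gamma_iP,\quad H_i=(A_i-\lambda_i I)(B-\nu I)^\dagger\otimes\Gamma_iQ.$$ All matrix norms are operator norms; vector norms are Euclidean. *)

From HB Require Import structures.
From mathcomp Require Import all_boot all_order all_algebra.
From mathcomp Require Import complex mxtens.
From mathcomp Require Import classical_sets reals.
Set Implicit Arguments.
Unset Strict Implicit.
Unset Printing Implicit Defensive.
Import Order.TTheory GRing.Theory Num.Theory.
Local Open Scope ring_scope.
Local Open Scope classical_set_scope.

Section Defs.
Variable R : realType.
Local Notation C := (R[i]).

Definition vnorm (p : nat) (v : 'cV[C]_p) : R :=
  Num.sqrt (\sum_(k < p) (complex.Re (v k 0) ^+ 2 + complex.Im (v k 0) ^+ 2)).

Definition adjmx (p q : nat) (M : 'M[C]_(p, q)) : 'M[C]_(q, p) :=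
  (map_mx (@conjc R) M)^T.

Definition is_hermitian (p : nat) (M : 'M[C]_p) : Prop := adjmx M = M.

Definition opnorm (p q : nat) (M : 'M[C]_(p, q)) : R :=
  sup [set r : R | exists v : 'cV[C]_q, vnorm v = 1 /\ r = vnorm (M *m v)].

Definition sigma_min (p : nat) (M : 'M[C]_p) : R :=
  inf [set r : R | exists v : 'cV[C]_p, vnorm v = 1 /\ r = vnorm (M *m v)].

Definition RtoC (x : R) : C := Complex x 0.

Definition Pproj (m : nat) : 'M[C]_(m + m) := block_mx 1%:M 0 0 0.
Definition Qproj (m : nat) : 'M[C]_(m + m) := block_mx 0 0 0 1%:M.

Definition clifford_rep (d m : nat) (G : 'I_d -> 'M[C]_(m + m)) : Prop :=
  (forall i, is_hermitian (G i)) /\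
  (forall i, G i *m G i = 1%:M) /\
  (forall i j, i != j -> G i *m G j = - (G j *m G i)).

Definition localizer (n d m : nat) (G : 'I_d -> 'M[C]_(m + m))
  (A : 'I_d -> 'M[C]_n) (B : 'M[C]_n) (lam : 'I_d -> R) (nu : C)
  : 'M[C]_(n * (m + m)) :=
  \sum_(i < d) tensmx (A i - (RtoC (lam i))%:M) (G i)
  + tensmx (B - nu%:M) (Pproj m)
  - tensmx (adjmx (B - nu%:M)) (Qproj m).

Definition clifford_gap (n d m : nat) (G : 'I_d -> 'M[C]_(m + m))
  (A : 'I_d -> 'M[C]_n) (B : 'M[C]_n) (lam : 'I_d -> R) (nu : C) : R :=
  sigma_min (localizer G A B lam nu).

Definition clifford_pseudospectrum (n d m : nat) (G : 'I_d -> 'M[C]_(m + m))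
  (A : 'I_d -> 'M[C]_n) (B : 'M[C]_n) (eps : R) : set ((('I_d -> R) * C)%type) :=
  [set site | clifford_gap G A B site.1 site.2 <= eps].

Definition Fmx (n d m : nat) (G : 'I_d -> 'M[C]_(m + m))
  (A : 'I_d -> 'M[C]_n) (B : 'M[C]_n) (lam : 'I_d -> R) (nu : C)
  : 'M[C]_(n * (m + m)) :=
  let X := B - nu%:M in
  let Gi i := tensmx ((A i - (RtoC (lam i))%:M) *m X) (G i *m Pproj m) in
  let Hi i := tensmx ((A i - (RtoC (lam i))%:M) *m adjmx X) (G i *m Qproj m) in
  \sum_(i < d) (Gi i + adjmx (Gi i)) - \sum_(i < d) (Hi i + adjmx (Hi i)).

End Defs.

From HB Require Import structures.
From mathcomp Require Import all_boot all_order all_algebra.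
From mathcomp Require Import complex mxtens.
From mathcomp Require Import classical_sets reals.
From mathcomp Require Import ring lra.
Import Order.TTheory GRing.Theory Num.Theory.
Local Open Scope ring_scope.
Set Implicit Arguments. Unset Strict Implicit.

(* The witness is v = psi (x) phi, where phi = (e_1, e_1) / sqrt 2 puts equal
   weight on the ranges of P and Q.  With T = sum_i (A_i - lambda_i) (x) Gamma_i
   and Y = B - nu one has the matrix identity
     L^dagger L = T^2 + F + (Y^dagger Y) (x) P + (Y Y^dagger) (x) Q.
   At v the last two terms give |Y psi|^2 / 2 and |Y^dagger psi|^2 / 2, the
   diagonal of T^2 gives sum_i |(A_i - lambda_i) psi|^2 because Gamma_i^2 = 1,
   and anticommutation of the Gamma_i groups the off-diagonal terms of T^2 into
   [A_i, A_k] (x) Gamma_i Gamma_k with Gamma_i Gamma_k unitary.  Hence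
   |L v|^2 <= eps1 / 2 + eps2 <= eps1 / sqrt 2 + eps2, and sigma_min L <= |L v|.
*)

Lemma tensmxBl (K : pzRingType) p q r s (M N : 'M[K]_(p, q)) (U : 'M[K]_(r, s)) :
  (M - N) *t U = M *t U - N *t U.
Proof. by apply/matrixP => i j; rewrite !mxE mulrBl. Qed.

Lemma tensmxNr (K : pzRingType) p q r s (M : 'M[K]_(p, q)) (U : 'M[K]_(r, s)) :
  M *t (- U) = - (M *t U).
Proof. by apply/matrixP => i j; rewrite !mxE mulrN. Qed.

Lemma tensmx_mulv (K : comPzRingType) p q (M : 'M[K]_p) (U : 'M[K]_q)
    (a : 'cV[K]_p) (b : 'cV[K]_q) :
  (M *t U) *m (a *t b) = (M *m a) *t (U *m b) :> 'cV_(p * q).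
Proof. exact: (tensmx_mul M U a b). Qed.

Lemma commmx_subr_scalar (K : comPzRingType) p (M N : 'M[K]_p) (a b : K) :
  (M - a%:M) *m (N - b%:M) - (N - b%:M) *m (M - a%:M) = M *m N - N *m M.
Proof.
rewrite !mulmxBl !mulmxBr (scalar_mxC b M) (scalar_mxC a N) -!scalar_mxM mulrC.
rewrite !opprB !addrA; congr (_ - _).
rewrite (ACl (1 * ((2 * 5) * ((3 * 6) * (4 * 7)))))%AC /=.
by rewrite addNr subrr addNr !addr0.
Qed.

Lemma sum_offdiag_pair_le (K : numDomainType) (I : finType) (f g : I -> I -> K) :
  (forall i k, k != i -> f i k + f k i <= g i k) ->
  2 * \sum_i \sum_(k | k != i) f i k <= \sum_i \sum_(k | k != i) g i k.
Proof.
move=> fg; rewrite mulr2n mulrDl mul1r.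
rewrite [X in X + _ <= _](exchange_big_dep xpredT) //=.
rewrite -big_split; apply: ler_sum => i _.
rewrite (eq_bigl (fun k => k != i)) => [|k]; last by rewrite eq_sym.
by rewrite -big_split; apply: ler_sum => k /fg; rewrite addrC.
Qed.

Section Adjoint.
Variable R : realType.
Local Notation C := R[i].

Lemma adjmx_is_zmod_morphism p q : zmod_morphism (@adjmx R p q).
Proof. by move=> M N; apply/matrixP => i j; rewrite !mxE rmorphB. Qed.

HB.instance Definition _ p q :=
  GRing.isZmodMorphism.Build _ _ (@adjmx R p q) (@adjmx_is_zmod_morphism p q).

Lemma adjmxK p q (M : 'M[C]_(p, q)) : adjmx (adjmx M) = M.
Proof. by apply/matrixP => i j; rewrite !mxE conjcK. Qed.

Lemma adjmxM p q r (M : 'M[C]_(p, q)) (N : 'M[C]_(q, r)) :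
  adjmx (M *m N) = adjmx N *m adjmx M.
Proof. by rewrite /adjmx map_mxM trmx_mul. Qed.

Lemma adjmx_scalar p (a : C) : adjmx (a%:M : 'M_p) = (conjc a)%:M.
Proof. by rewrite /adjmx map_scalar_mx tr_scalar_mx. Qed.

Lemma adjmx_tens p q r s (M : 'M[C]_(p, q)) (N : 'M[C]_(r, s)) :
  adjmx (M *t N) = adjmx M *t adjmx N.
Proof. by rewrite /adjmx map_mxT trmx_tens. Qed.

Lemma adjmx_block p1 p2 q1 q2 (M11 : 'M[C]_(p1, q1)) (M12 : 'M[C]_(p1, q2))
    (M21 : 'M[C]_(p2, q1)) (M22 : 'M[C]_(p2, q2)) :
  adjmx (block_mx M11 M12 M21 M22)
  = block_mx (adjmx M11) (adjmx M21) (adjmx M12) (adjmx M22).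
Proof. by rewrite /adjmx map_block_mx tr_block_mx. Qed.

End Adjoint.

Section InnerProduct.
Variable R : realType.
Local Notation C := R[i].

Definition cdot p (u w : 'cV[C]_p) : C := (adjmx u *m w) 0 0.

Definition sqnorm p (v : 'cV[C]_p) : R :=
  \sum_k (complex.Re (v k 0) ^+ 2 + complex.Im (v k 0) ^+ 2).

Lemma vnormE p (v : 'cV[C]_p) : vnorm v = Num.sqrt (sqnorm v).
Proof. by []. Qed.

Lemma sqnorm_ge0 p (v : 'cV[C]_p) : 0 <= sqnorm v.
Proof. by apply: sumr_ge0 => k _; rewrite addr_ge0 ?sqr_ge0. Qed.

Lemma vnorm_ge0 p (v : 'cV[C]_p) : 0 <= vnorm v.
Proof. exact: sqrtr_ge0. Qed.

Lemma sqr_vnorm p (v : 'cV[C]_p) : vnorm v ^+ 2 = sqnorm v.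
Proof. by rewrite sqr_sqrtr ?sqnorm_ge0. Qed.

Lemma vnorm0_eq0 p (v : 'cV[C]_p) : vnorm v = 0 -> v = 0.
Proof.
move=> /eqP; rewrite sqrtr_eq0 => le0.
have /psumr_eq0P v0 : sqnorm v = 0 by apply/le_anti; rewrite le0 sqnorm_ge0.
apply/matrixP => k j; rewrite ord1 mxE.
have /eqP := v0 (fun k _ => addr_ge0 (sqr_ge0 _) (sqr_ge0 _)) k isT.
rewrite paddr_eq0 ?sqr_ge0 // !sqrf_eq0.
by case: (v k 0) => a b /= /andP[/eqP-> /eqP->].
Qed.

Lemma cdotE p (u w : 'cV[C]_p) : cdot u w = \sum_k conjc (u k 0) * w k 0.
Proof. by rewrite /cdot mxE; apply: eq_bigr => k _; rewrite !mxE. Qed.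

Lemma Re_cdot p (u w : 'cV[C]_p) : complex.Re (cdot u w) =
  \sum_k (complex.Re (u k 0) * complex.Re (w k 0)
          + complex.Im (u k 0) * complex.Im (w k 0)).
Proof.
rewrite cdotE raddf_sum; apply: eq_bigr => k _.
by case: (u k 0) => a b; case: (w k 0) => c e /=; ring.
Qed.

Lemma cdotvv p (v : 'cV[C]_p) : cdot v v = (sqnorm v)%:C%C.
Proof.
rewrite cdotE raddf_sum; apply: eq_bigr => k _.
by case: (v k 0) => a b /=; apply/eqP; rewrite eq_complex /=; apply/andP; split;
  apply/eqP; ring.
Qed.

Lemma cdot_adjmx p q (M : 'M[C]_(p, q)) (u : 'cV[C]_p) (w : 'cV[C]_q) :
  cdot u (M *m w) = cdot (adjmx M *m u) w.
Proof. by rewrite /cdot adjmxM adjmxK mulmxA. Qed.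

Lemma cdot_tens p q (a c : 'cV[C]_p) (b e : 'cV[C]_q) :
  cdot (a *t b) (c *t e) = cdot a c * cdot b e.
Proof.
rewrite /cdot (adjmx_tens a b : adjmx (a *t b : 'cV_(p * q)) = _).
rewrite (tensmx_mul (adjmx a) (adjmx b) c e) mxE.
by rewrite !(ord1 (Ordinal _)).
Qed.

Lemma cdot0l p (w : 'cV[C]_p) : cdot 0 w = 0.
Proof. by rewrite /cdot raddf0 mul0mx mxE. Qed.

Lemma cdot0r p (u : 'cV[C]_p) : cdot u 0 = 0.
Proof. by rewrite /cdot mulmx0 mxE. Qed.

Lemma Re_cdot_le p (u w : 'cV[C]_p) :
  complex.Re (cdot u w) <= vnorm u * vnorm w.
Proof.
have [u0|s_neq0] := eqVneq (vnorm u) 0.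
  by rewrite u0 mul0r (vnorm0_eq0 u0) cdot0l.
have [w0|t_neq0] := eqVneq (vnorm w) 0.
  by rewrite w0 mulr0 (vnorm0_eq0 w0) cdot0r.
set s := vnorm u in s_neq0 *; set t := vnorm w in t_neq0 *.
have sos : 0 <= 2 * s * t * (s * t - complex.Re (cdot u w)).
  have -> : 2 * s * t * (s * t - complex.Re (cdot u w)) =
      \sum_k ((t * complex.Re (u k 0) - s * complex.Re (w k 0)) ^+ 2
             + (t * complex.Im (u k 0) - s * complex.Im (w k 0)) ^+ 2).
    transitivity (t ^+ 2 * sqnorm u - 2 * s * t * complex.Re (cdot u w)
                  + s ^+ 2 * sqnorm w).
      by rewrite -!sqr_vnorm -/s -/t; ring.
    rewrite Re_cdot /sqnorm !mulr_sumr -sumrB -big_split /=.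
    by apply: eq_bigr => k _; ring.
  by apply: sumr_ge0 => k _; rewrite addr_ge0 ?sqr_ge0.
have st_gt0 : 0 < s * t by rewrite mulr_gt0 // lt_def ?s_neq0 ?t_neq0 vnorm_ge0.
nra.
Qed.

Lemma sqnorm_tens p q (a : 'cV[C]_p) (b : 'cV[C]_q) :
  sqnorm (a *t b) = sqnorm a * sqnorm b.
Proof.
have Re_cdotvv r (v : 'cV[C]_r) : complex.Re (cdot v v) = sqnorm v.
  by rewrite cdotvv.
by rewrite -Re_cdotvv cdot_tens !cdotvv -rmorphM.
Qed.

Lemma vnorm_tens p q (a : 'cV[C]_p) (b : 'cV[C]_q) :
  vnorm (a *t b) = vnorm a * vnorm b.
Proof. by rewrite !vnormE sqnorm_tens sqrtrM ?sqnorm_ge0. Qed.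

Definition qform p (v : 'cV[C]_p) (M : 'M[C]_p) : R :=
  complex.Re (cdot v (M *m v)).

Lemma qform_is_zmod_morphism p (v : 'cV[C]_p) : zmod_morphism (qform v).
Proof. by move=> M N; rewrite /qform mulmxBl /cdot mulmxBr !mxE raddfB. Qed.

HB.instance Definition _ p (v : 'cV[C]_p) :=
  GRing.isZmodMorphism.Build _ _ (qform v) (qform_is_zmod_morphism v).

Lemma cdot_gram p q (M : 'M[C]_(q, p)) (v : 'cV[C]_p) :
  cdot v ((adjmx M *m M) *m v) = (sqnorm (M *m v))%:C%C.
Proof. by rewrite -mulmxA cdot_adjmx adjmxK cdotvv. Qed.

Lemma qform_gram p q (M : 'M[C]_(q, p)) (v : 'cV[C]_p) :
  qform v (adjmx M *m M) = sqnorm (M *m v).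
Proof. by rewrite /qform cdot_gram. Qed.

Lemma vnorm_unitary p (U : 'M[C]_p) (v : 'cV[C]_p) :
  adjmx U *m U = 1%:M -> vnorm (U *m v) = vnorm v.
Proof. by move=> UU; rewrite !vnormE -qform_gram UU /qform mul1mx cdotvv. Qed.

Lemma qform_le_vnorm p (v : 'cV[C]_p) (M : 'M[C]_p) :
  vnorm v = 1 -> qform v M <= vnorm (M *m v).
Proof. by move=> v1; rewrite -[X in _ <= X]mul1r -v1 Re_cdot_le. Qed.

Lemma qform_tens p q (a : 'cV[C]_p) (b : 'cV[C]_q) (M : 'M[C]_p) (K : 'M[C]_q) :
  qform (a *t b) (M *t K) = complex.Re (cdot a (M *m a) * cdot b (K *m b)).
Proof. by rewrite /qform tensmx_mulv cdot_tens. Qed.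

Lemma qform_tens_gram p q r s (a : 'cV[C]_p) (b : 'cV[C]_q)
    (M : 'M[C]_(r, p)) (K : 'M[C]_(s, q)) :
  qform (a *t b) ((adjmx M *m M) *t (adjmx K *m K))
  = sqnorm (M *m a) * sqnorm (K *m b).
Proof. by rewrite qform_tens !cdot_gram -rmorphM. Qed.

End InnerProduct.

Section OperatorNorm.
Variable R : realType.
Local Notation C := R[i].

Lemma sqnorm1_coord_le1 p (v : 'cV[C]_p) k : sqnorm v = 1 ->
  `|complex.Re (v k 0)| <= 1 /\ `|complex.Im (v k 0)| <= 1.
Proof.
move=> v1; have : complex.Re (v k 0) ^+ 2 + complex.Im (v k 0) ^+ 2 <= 1.
  rewrite -v1 /sqnorm (bigD1 k) //= lerDl.
  by apply: sumr_ge0 => j _; rewrite addr_ge0 ?sqr_ge0.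
have le1 (x : R) : x ^+ 2 <= 1 -> `|x| <= 1.
  by rewrite -(real_normK (num_real x)) expr_le1.
have := sqr_ge0 (complex.Re (v k 0)); have := sqr_ge0 (complex.Im (v k 0)).
by move=> *; split; apply: le1; lra.
Qed.

Lemma norm_ReIm_mul_le (z x : C) :
  `|complex.Re x| <= 1 -> `|complex.Im x| <= 1 ->
  `|complex.Re (z * x)| <= `|complex.Re z| + `|complex.Im z|
  /\ `|complex.Im (z * x)| <= `|complex.Re z| + `|complex.Im z|.
Proof.
case: z => a b; case: x => c e /= c1 e1; split.
  rewrite (le_trans (ler_normB _ _)) // !normrM.
  by apply: lerD; apply: ler_piMr.
rewrite (le_trans (ler_normD _ _)) // !normrM.
by apply: lerD; apply: ler_piMr.
Qed.

(* A crude bound whose only role is to make the set in [opnorm] bounded, so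
   that its [sup] is meaningful. *)
Lemma sqnorm_mulmx_le p q (M : 'M[C]_(p, q)) (v : 'cV[C]_q) : sqnorm v = 1 ->
  sqnorm (M *m v) <=
  \sum_k 2 * (\sum_j (`|complex.Re (M k j)| + `|complex.Im (M k j)|)) ^+ 2.
Proof.
move=> v1; apply: ler_sum => k _; set c := \sum_j _.
have coord j := norm_ReIm_mul_le (M k j) (sqnorm1_coord_le1 j v1).1
                                 (sqnorm1_coord_le1 j v1).2.
have Re_le : `|complex.Re ((M *m v) k 0)| <= c.
  rewrite mxE raddf_sum (le_trans (ler_norm_sum _ _ _)) //.
  by apply: ler_sum => j _; case: (coord j).
have Im_le : `|complex.Im ((M *m v) k 0)| <= c.
  rewrite mxE raddf_sum (le_trans (ler_norm_sum _ _ _)) //.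
  by apply: ler_sum => j _; case: (coord j).
have sq_le (x : R) : `|x| <= c -> x ^+ 2 <= c ^+ 2.
  move=> xc; rewrite -(real_normK (num_real x)).
  by apply: lerXn2r; rewrite ?nnegrE ?(le_trans _ xc).
by have := sq_le _ Re_le; have := sq_le _ Im_le; lra.
Qed.

Lemma vnorm_mulmx_le_opnorm p q (M : 'M[C]_(p, q)) (v : 'cV[C]_q) :
  vnorm v = 1 -> vnorm (M *m v) <= opnorm M.
Proof.
have unit_sq (w : 'cV[C]_q) : vnorm w = 1 -> sqnorm w = 1.
  by move=> w1; rewrite -sqr_vnorm w1 expr1n.
move=> v1; apply: ub_le_sup; last by exists v.
exists (Num.sqrt (\sum_k 2 * (\sum_j (`|complex.Re (M k j)|
                                      + `|complex.Im (M k j)|)) ^+ 2)).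
move=> _ [w [w1 ->]]; rewrite vnormE ler_sqrt ?sqnorm_mulmx_le ?unit_sq //.
exact: le_trans (sqnorm_ge0 _) (sqnorm_mulmx_le M (unit_sq w w1)).
Qed.

Lemma opnorm_ge0 p q (M : 'M[C]_(p, q)) (v : 'cV[C]_q) :
  vnorm v = 1 -> 0 <= opnorm M.
Proof. by move/(vnorm_mulmx_le_opnorm M); apply: le_trans; apply: vnorm_ge0. Qed.

Lemma qform_le_opnorm p (M : 'M[C]_p) (v : 'cV[C]_p) :
  vnorm v = 1 -> qform v M <= opnorm M.
Proof.
by move=> v1; rewrite (le_trans (qform_le_vnorm M v1)) ?vnorm_mulmx_le_opnorm.
Qed.

Lemma qform_tens_le_opnorm p q (a : 'cV[C]_p) (b : 'cV[C]_q)
    (M : 'M[C]_p) (U : 'M[C]_q) :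
  vnorm a = 1 -> vnorm b = 1 -> adjmx U *m U = 1%:M ->
  qform (a *t b) (M *t U) <= opnorm M.
Proof.
move=> a1 b1 UU; have ab1 : vnorm (a *t b) = 1 by rewrite vnorm_tens a1 b1 mulr1.
rewrite (le_trans (qform_le_vnorm _ ab1)) //.
rewrite tensmx_mulv vnorm_tens (vnorm_unitary _ UU) b1 mulr1.
exact: vnorm_mulmx_le_opnorm.
Qed.

Lemma sigma_min_le p (M : 'M[C]_p) (v : 'cV[C]_p) :
  vnorm v = 1 -> sigma_min M <= vnorm (M *m v).
Proof.
move=> v1; apply: ge_inf; last by exists v.
by exists 0 => _ [w [_ ->]]; apply: vnorm_ge0.
Qed.

End OperatorNorm.

Section Projections.
Variable (R : realType) (m : nat).
Local Notation C := R[i].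
Local Notation P := (Pproj R m).
Local Notation Q := (Qproj R m).

Lemma adjmx_Pproj : adjmx P = P.
Proof. by rewrite /Pproj adjmx_block !raddf0 adjmx_scalar conjc1. Qed.

Lemma adjmx_Qproj : adjmx Q = Q.
Proof. by rewrite /Qproj adjmx_block !raddf0 adjmx_scalar conjc1. Qed.

Lemma Pproj_idem : P *m P = P.
Proof. by rewrite /Pproj mulmx_block !mulmx0 !mul0mx !addr0 mulmx1. Qed.

Lemma Qproj_idem : Q *m Q = Q.
Proof. by rewrite /Qproj mulmx_block !mulmx0 !mul0mx !addr0 add0r mulmx1. Qed.

Lemma Pproj_Qproj : P *m Q = 0.
Proof. by rewrite /Pproj /Qproj mulmx_block !mulmx0 !mul0mx !addr0 block_mx0. Qed.

Lemma Qproj_Pproj : Q *m P = 0.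
Proof. by rewrite /Pproj /Qproj mulmx_block !mulmx0 !mul0mx !addr0 block_mx0. Qed.

Lemma sqnorm_col_mx p1 p2 (x : 'cV[C]_p1) (y : 'cV[C]_p2) :
  sqnorm (col_mx x y) = sqnorm x + sqnorm y.
Proof. by rewrite /sqnorm big_split_ord; congr (_ + _); apply: eq_bigr => k _;
  rewrite ?col_mxEu ?col_mxEd. Qed.

Lemma sqnorm0 p : sqnorm (0 : 'cV[C]_p) = 0.
Proof. by rewrite /sqnorm big1 // => k _; rewrite mxE expr0n addr0. Qed.

Variable hm : (0 < m)%N.

Definition half_e0 : 'cV[C]_m :=
  (Num.sqrt 2^-1)%:C%C *: delta_mx (Ordinal hm) 0.

Definition balanced_unit : 'cV[C]_(m + m) := col_mx half_e0 half_e0.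

Lemma sqnorm_half_e0 : sqnorm half_e0 = 2^-1.
Proof.
rewrite /sqnorm (bigD1 (Ordinal hm)) //= big1 => [|k /negbTE k_neq].
  rewrite !mxE eqxx /= mulr1 !mulr0 !mul0r subr0 !addr0 expr0n /= addr0.
  by rewrite sqr_sqrtr // invr_ge0.
by rewrite !mxE k_neq /= !mulr0 subr0 addr0 expr0n /= addr0.
Qed.

Lemma vnorm_balanced_unit : vnorm balanced_unit = 1.
Proof.
rewrite vnormE sqnorm_col_mx sqnorm_half_e0 -[RHS]sqrtr1; congr Num.sqrt.
by field.
Qed.

Lemma sqnorm_Pproj_balanced : sqnorm (P *m balanced_unit) = 2^-1.
Proof.
rewrite mul_block_col !mul0mx mul1mx !addr0 sqnorm_col_mx sqnorm0 addr0.
exact: sqnorm_half_e0.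
Qed.

Lemma sqnorm_Qproj_balanced : sqnorm (Q *m balanced_unit) = 2^-1.
Proof.
rewrite mul_block_col !mul0mx mul1mx !add0r sqnorm_col_mx sqnorm0 add0r.
exact: sqnorm_half_e0.
Qed.

End Projections.

Section CliffordSquare.
Variables (R : realType) (d p m : nat).
Variables (G : 'I_d -> 'M[R[i]]_(m + m)) (X : 'I_d -> 'M[R[i]]_p).
Hypotheses (HG : clifford_rep G) (HX : forall i, adjmx (X i) = X i).
Variables (a : 'cV[R[i]]_p) (b : 'cV[R[i]]_(m + m)).
Hypotheses (a1 : vnorm a = 1) (b1 : vnorm b = 1).

Let G_herm i : adjmx (G i) = G i. Proof. exact: HG.1. Qed.
Let G_unitary i : adjmx (G i) *m G i = 1%:M.
Proof. by rewrite G_herm HG.2.1. Qed.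

Lemma clifford_sum_sqE :
  (\sum_i X i *t G i) *m (\sum_i X i *t G i)
  = \sum_i \sum_k (X i *m X k) *t (G i *m G k).
Proof.
rewrite mulmx_suml; apply: eq_bigr => i _.
by rewrite mulmx_sumr; apply: eq_bigr => k _; rewrite tensmx_mul.
Qed.

Lemma qform_clifford_diag i :
  qform (a *t b) ((X i *m X i) *t (G i *m G i)) = sqnorm (X i *m a).
Proof.
rewrite -{1}HX -{1}G_herm qform_tens_gram -[sqnorm (G i *m b)]sqr_vnorm.
rewrite (vnorm_unitary _ (G_unitary i)).
by rewrite b1 expr1n mulr1.
Qed.

Lemma qform_clifford_pair i k : k != i ->
  qform (a *t b) ((X i *m X k) *t (G i *m G k))
  + qform (a *t b) ((X k *m X i) *t (G k *m G i))
  <= opnorm (X i *m X k - X k *m X i).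
Proof.
move=> ki; rewrite (HG.2.2 k i ki) tensmxNr raddfN -raddfB -tensmxBl.
apply: qform_tens_le_opnorm => //.
by rewrite adjmxM !G_herm mulmxA -(mulmxA (G k)) HG.2.1 mulmx1 HG.2.1.
Qed.

Lemma qform_clifford_sq_le :
  2 * qform (a *t b) ((\sum_i X i *t G i) *m (\sum_i X i *t G i))
  <= 2 * \sum_i sqnorm (X i *m a)
     + \sum_i \sum_(k | k != i) opnorm (X i *m X k - X k *m X i).
Proof.
rewrite clifford_sum_sqE raddf_sum.
under eq_bigr => i _ do rewrite raddf_sum (bigD1 i) //= qform_clifford_diag.
rewrite big_split /= mulrDr lerD2l.
exact: sum_offdiag_pair_le qform_clifford_pair.
Qed.

End CliffordSquare.

Section Localizer.
Variables (R : realType) (n d m : nat).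
Variables (G : 'I_d -> 'M[R[i]]_(m + m)) (A : 'I_d -> 'M[R[i]]_n).
Variables (B : 'M[R[i]]_n) (lam : 'I_d -> R) (nu : R[i]).
Hypotheses (HG : clifford_rep G) (HA : forall i, is_hermitian (A i)).

Local Notation P := (Pproj R m).
Local Notation Q := (Qproj R m).
Local Notation L := (localizer G A B lam nu).
Local Notation F := (Fmx G A B lam nu).
Let X i := A i - (RtoC (lam i))%:M.
Let Y := B - nu%:M.
Let T := \sum_i X i *t G i.

Let X_herm i : adjmx (X i) = X i.
Proof. by rewrite /X raddfB /= adjmx_scalar HA /RtoC /= oppr0. Qed.

Let T_herm : adjmx T = T.
Proof.
by rewrite raddf_sum /=; apply: eq_bigr => i _; rewrite adjmx_tens X_herm HG.1.
Qed.

Lemma FmxE : F = T *m (Y *t P) + (adjmx Y *t P) *m T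
                      - (T *m (adjmx Y *t Q) + (Y *t Q) *m T).
Proof.
rewrite /Fmx /= -/Y !big_split /= !mulmx_suml !mulmx_sumr.
congr (_ + _ - (_ + _)); apply: eq_bigr => i _;
  by rewrite ?adjmx_tens ?adjmxM ?X_herm ?HG.1 ?adjmx_Pproj ?adjmx_Qproj ?adjmxK
             tensmx_mul.
Qed.

Lemma localizer_gram :
  adjmx L *m L = T *m T + F + (adjmx Y *m Y) *t P + (Y *m adjmx Y) *t Q.
Proof.
have LE : L = T + Y *t P - adjmx Y *t Q by [].
have adjL : adjmx L = T + adjmx Y *t P - Y *t Q.
  rewrite LE raddfB raddfD /= T_herm !adjmx_tens adjmxK.
  by rewrite adjmx_Pproj adjmx_Qproj.
rewrite adjL LE FmxE; clearbody T Y.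
rewrite !mulmxBl !mulmxDl !mulmxBr !mulmxDr !tensmx_mul.
rewrite Pproj_idem Qproj_idem Pproj_Qproj Qproj_Pproj !tensmx0 subr0 addr0.
by rewrite !opprD !opprK !addrA [LHS](ACl (1*2*4*3*6*5*7))%AC.
Qed.

Variables (psi : 'cV[R[i]]_n) (hm : (0 < m)%N).
Hypothesis psi1 : vnorm psi = 1.
Let phi := balanced_unit R hm.

Lemma sqnorm_localizer_le :
  2 * sqnorm (L *m (psi *t phi))
  <= 2 * (\sum_i sqnorm (A i *m psi - RtoC (lam i) *: psi))
     + sqnorm (B *m psi - nu *: psi)
     + sqnorm (adjmx B *m psi - conjc nu *: psi)
     + (\sum_i \sum_(k | k != i) opnorm (A i *m A k - A k *m A i)
        + 2 * opnorm F).
Proof.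
have v1 : vnorm (psi *t phi) = 1.
  by rewrite vnorm_tens psi1 vnorm_balanced_unit mulr1.
have T2_le := qform_clifford_sq_le HG X_herm psi1 (vnorm_balanced_unit R hm).
have F_le := qform_le_opnorm F v1.
have qform_YP : qform (psi *t phi) ((adjmx Y *m Y) *t P) = sqnorm (Y *m psi) / 2.
  by rewrite -Pproj_idem -{1}adjmx_Pproj qform_tens_gram sqnorm_Pproj_balanced.
have qform_YQ : qform (psi *t phi) ((Y *m adjmx Y) *t Q)
          = sqnorm (adjmx Y *m psi) / 2.
  rewrite -{1}(adjmxK Y) -Qproj_idem -{1}adjmx_Qproj qform_tens_gram.
  by rewrite sqnorm_Qproj_balanced.
have Xpsi i : A i *m psi - RtoC (lam i) *: psi = X i *m psi.
  by rewrite mulmxBl mul_scalar_mx.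
have Ypsi : B *m psi - nu *: psi = Y *m psi by rewrite mulmxBl mul_scalar_mx.
have Y'psi : adjmx B *m psi - conjc nu *: psi = adjmx Y *m psi.
  by rewrite raddfB /= adjmx_scalar mulmxBl mul_scalar_mx.
have -> : \sum_i \sum_(k | k != i) opnorm (A i *m A k - A k *m A i)
          = \sum_i \sum_(k | k != i) opnorm (X i *m X k - X k *m X i).
  by apply: eq_bigr => i _; apply: eq_bigr => k _; rewrite commmx_subr_scalar.
rewrite -qform_gram localizer_gram 3!raddfD /= qform_YP qform_YQ Ypsi Y'psi.
under eq_bigr do rewrite Xpsi.
lra.
Qed.

End Localizer.

Theorem mainTheorem3 (R : realType) (n d m : nat)
  (Hn : (0 < n)%N) (Hd : (0 < d)%N) (Hm : (0 < m)%N)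
  (G : 'I_d -> 'M[R[i]]_(m + m)) (HG : clifford_rep G)
  (A : 'I_d -> 'M[R[i]]_n) (HA : forall i, is_hermitian (A i))
  (B : 'M[R[i]]_n) (lam : 'I_d -> R) (nu : R[i])
  (eps1 eps2 : R) (He1 : 0 <= eps1) (He2 : 0 <= eps2)
  (psi : 'cV[R[i]]_n) (Hpsi : vnorm psi = 1)
  (H1 : 2 * (\sum_(i < d) vnorm (A i *m psi - RtoC (lam i) *: psi) ^+ 2)
        + vnorm (B *m psi - nu *: psi) ^+ 2
        + vnorm (adjmx B *m psi - conjc nu *: psi) ^+ 2 <= eps1)
  (H2 : \sum_(i < d) \sum_(k < d | k != i)
          opnorm (A i *m A k - A k *m A i)
        + opnorm (Fmx G A B lam nu) <= eps2) :
  clifford_pseudospectrum G A B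
    (Num.sqrt ((Num.sqrt 2)^-1 * eps1 + eps2)) (lam, nu).
Proof.
rewrite /clifford_pseudospectrum /clifford_gap /=.
set L := localizer G A B lam nu; set v := psi *t balanced_unit R Hm.
have v1 : vnorm v = 1 by rewrite vnorm_tens Hpsi vnorm_balanced_unit mulr1.
have Lv := sqnorm_localizer_le B lam nu HG HA Hm Hpsi.
rewrite (eq_bigr _ (fun i _ => sqr_vnorm _)) !sqr_vnorm in H1.
have O_ge0 : 0 <= \sum_i \sum_(k | k != i) opnorm (A i *m A k - A k *m A i).
  by do 2!apply: sumr_ge0 => ? _; apply: opnorm_ge0 Hpsi.
(* The test vector gives the sharper constant 1/2 in front of eps1. *)
have half_le : eps1 / 2 <= (Num.sqrt 2)^-1 * eps1.
  rewrite mulrC ler_wpM2r // lef_pV2 ?posrE ?sqrtr_gt0 ?ltr0n //.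
  by rewrite -(ler_pXn2r (n := 2)) ?nnegrE ?sqrtr_ge0 // sqr_sqrtr //; lra.
apply: le_trans (sigma_min_le L v1) _.
by rewrite vnormE ler_sqrt; lra.
Qed.
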